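(* Let $V_\mu,V_\nu$ be non-isomorphic indecomposable $\Lambda$-modules and $s,t\ge1$ integers such that $V_\lambda\cong sV_\mu\oplus tV_\nu$ is exceptional. Then in $\mathscr H(\Lambda)$ $$\langle u_{s\mu\oplus t\nu}\rangle=v^{\langle t\nu,s\mu\rangle-2st\dim_k\mathrm{Hom}_\Lambda(V_\nu,V_\mu)}\langle u_{s\mu}\rangle\langle u_{t\nu}\rangle,$$ where $u_{s\mu}$ denotes the class of $sV_\mu$ (the direct sum of $s$ copies), etc.
   Context: $\Lambda$ is a finite-dimensional hereditary algebra over a finite field $k$ with $q$ elements, $v=\sqrt q$. $\mathcal P$ is the set of isomorphism classes of finite-dimensional $\Lambda$-modules, with representatives $V_\alpha$. Euler form $\langle\alpha,\beta\rangle=\dim_k\mathrm{Hom}(V_\alpha,V_\beta)-\dim_k\mathrm{Ext}^1(V_\alpha,V_\beta)$, $\varepsilon(\alpha)=\langle\alpha,\alpha\rangle$; $g^\lambda_{\alpha\beta}$ is the number of submodules $B\subseteq V_\lambda$ with $B\cong V_\beta$, $V_\lambda/B\cong V_\alpha$. The Hall algebra $\mathscr H(\Lambda)$ has basis $\langle u_\alpha\rangle=v^{-\dim_kV_\alpha+\varepsilon(\alpha)}u_\alpha$ with $\langle u_\alpha\rangle\langle u_\beta\rangle=v^{-\langle\beta,\alpha\rangle}\sum_\lambda g^\lambda_{\alpha\beta}\langle u_\lambda\rangle$. Exceptional means $\mathrm{Ext}^1(V,V)=0$. *)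

From HB Require Import structures.
From mathcomp Require Import all_boot all_order all_algebra all_fingroup all_field.
From Stdlib Require Import ClassicalEpsilon.
Set Implicit Arguments. Unset Strict Implicit. Unset Printing Implicit Defensive.
Import Order.TTheory GRing.Theory Num.Theory.
Local Open Scope ring_scope.

Definition asb (P : Prop) : bool :=
  if excluded_middle_informative P then true else false.

(* dim_k of the subspace {x | P x} of a k-vector space vT
   (P is required to describe a subspace; then this is its dimension). *)
Definition dimP (k : fieldType) (vT : vectType k) (P : vT -> Prop) : nat :=
  \dim (epsilon (inhabits (0%VS : {vspace vT}))
                (fun U : {vspace vT} => forall x, x \in U <-> P x)).

Section Modules.
Variables (k : finFieldType) (L : falgType k).

(* A finite-dimensional (right) L-module: k^n (row vectors) with
   x . a = x *m ract a. *)
Record rep := Rep { rdim : nat; ract : L -> 'M[k]_rdim }.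

Definition is_module (V : rep) : Prop :=
  [/\ forall (c : k) (a b : L), ract V (c *: a + b) = c *: ract V a + ract V b,
      ract V 1 = 1%:M
    & forall a b : L, ract V (a * b) = ract V a *m ract V b].

(* L-linear maps V -> W, x |-> x *m f *)
Definition is_hom (V W : rep) (f : 'M[k]_(rdim V, rdim W)) : Prop :=
  forall a : L, ract V a *m f = f *m ract W a.

Definition iso (V W : rep) : Prop :=
  exists f : 'M[k]_(rdim V, rdim W), [/\ is_hom f, row_free f & row_full f].

Definition dsum (V W : rep) : rep :=
  @Rep (rdim V + rdim W) (fun a => block_mx (ract V a) 0 0 (ract W a)).

Definition zero_rep : rep := @Rep 0 (fun _ => 0).

Fixpoint nsum (s : nat) (V : rep) : rep :=
  if s is s'.+1 then dsum V (nsum s' V) else zero_rep.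

Definition indecomposable (V : rep) : Prop :=
  [/\ is_module V, (0 < rdim V)%N &
      forall W1 W2, is_module W1 -> is_module W2 -> iso V (dsum W1 W2) ->
        rdim W1 = 0%N \/ rdim W2 = 0%N].

Definition hom_dim (V W : rep) : nat :=
  dimP (fun f : 'M[k]_(rdim V, rdim W) => is_hom f).

(* Ext^1_L(V, W) = Der(L, Hom_k(V,W)) / Inn(L, Hom_k(V,W)): derivations
   classify extensions 0 -> W -> E -> V -> 0 with E = V (+) W as k-spaces
   and action [[ract V a, d a], [0, ract W a]]; inner ones are split. *)
Definition is_der (V W : rep) (d : 'Hom(L, 'M[k]_(rdim V, rdim W))) : Prop :=
  forall a b : L, d (a * b) = ract V a *m d b + d a *m ract W b.

Definition is_inner (V W : rep) (d : 'Hom(L, 'M[k]_(rdim V, rdim W))) : Prop :=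
  exists f : 'M[k]_(rdim V, rdim W), forall a : L, d a = ract V a *m f - f *m ract W a.

Definition ext_dim (V W : rep) : nat :=
  (dimP (@is_der V W) - dimP (@is_inner V W))%N.

Definition euler (V W : rep) : int := (hom_dim V W)%:Z - (ext_dim V W)%:Z.

Definition exceptional (V : rep) : Prop := ext_dim V V = 0%N.

Definition projective (P : rep) : Prop :=
  is_module P /\
  forall (M : rep) (g : 'M[k]_(rdim M, rdim P)), is_module M -> is_hom g ->
    row_full g -> exists s : 'M[k]_(rdim P, rdim M), is_hom s /\ s *m g = 1%:M.

Definition hereditary : Prop :=
  forall (P U : rep) (f : 'M[k]_(rdim U, rdim P)),
    projective P -> is_module U -> is_hom f -> row_free f -> projective U.

(* Hall number g^Lam_{A B}: number of submodules B' of V_Lam (subspaces of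
   'rV_n, represented canonically by U = <<U>>) with B' ~ V_B, V_Lam/B' ~ V_A *)
Definition hall (Lam A B : rep) : nat :=
  #|[set U : 'M[k]_(rdim Lam) |
      [&& U == genmx U,
          asb (exists f : 'M[k]_(rdim B, rdim Lam),
                 [/\ is_hom f, row_free f & (f == U)%MS]) &
          asb (exists g : 'M[k]_(rdim Lam, rdim A),
                 [/\ is_hom g, row_full g & (kermx g == U)%MS])]]|.

Definition vq : algC := sqrtC (#|k|%:R).

(* Elements of the Hall algebra are represented by their coefficient
   function on modules w.r.t. the basis <u_lambda> (constant on iso classes).
   hbasis V = <u_[V]>;  hmul_basis A B = <u_A><u_B>
   = v^{-<B,A>} sum_lambda g^lambda_{A B} <u_lambda>. *)
Definition hbasis (V : rep) : rep -> algC :=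
  fun X => if asb (iso X V) then 1 else 0.

Definition hmul_basis (A B : rep) : rep -> algC :=
  fun X => vq ^ (- euler B A) * (hall X A B)%:R.

End Modules.

From Pilot Require Import Defs.
From HB Require Import structures.
From mathcomp Require Import all_boot all_order all_algebra all_fingroup all_field.
From Stdlib Require Import ClassicalEpsilon Classical.
Import Order.TTheory GRing.Theory Num.Theory.
Local Open Scope ring_scope.
Set Implicit Arguments. Unset Strict Implicit. Unset Printing Implicit Defensive.

(* Hall product of an exceptional sum sV_mu (+) tV_nu of two non-isomorphic
   indecomposables.  Write A = sV_mu and B = tV_nu.

   1. Ext^1(A (+) B, A (+) B) = 0 forces every derivation L -> Hom_k(A, B) to
      be inner, so every short exact sequence 0 -> B -> X -> A -> 0 splits;
      hence the Hall number g^X_{A B} vanishes unless X ~ A (+) B.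
   2. By Fitting's lemma a homomorphism between non-isomorphic
      indecomposables lies in the radical, and so does every homomorphism
      B -> A.  For X ~ A (+) B this makes the B-component of any embedding of
      B with cokernel A invertible, so the submodules counted by g^X_{A B}
      are exactly the graphs of the homomorphisms B -> A, and
      g^X_{A B} = |Hom(B, A)| = q^(st dim Hom(V_nu, V_mu)).
   3. The powers of v = sqrt q then cancel in the defining formula of the
      product <u_A><u_B>. *)

Lemma asbP (P : Prop) : reflect P (asb P).
Proof. by rewrite /asb; case: excluded_middle_informative => h; constructor. Qed.

Section SubspacePredicate.
Variables (K : fieldType) (vT : vectType K) (P : vT -> Prop).
Hypotheses (P0 : P 0) (PD : forall x y, P x -> P y -> P (x + y))
  (PZ : forall c x, P x -> P (c *: x)).

Lemma subspace_exists : exists U : {vspace vT}, forall x, x \in U <-> P x.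
Proof.
pose inside n := asb (exists U : {vspace vT}, (forall x, x \in U -> P x) /\ \dim U = n).
have inside0 : exists n, inside n.
  by exists 0%N; apply/asbP; exists 0%VS; rewrite dimv0; split=> // x /vlineP[c ->]; rewrite scaler0.
have inside_bound n : inside n -> (n <= \dim {: vT})%N.
  by case/asbP=> U [_ <-]; apply: dimvS (subvf U).
case: (ex_maxnP inside0 inside_bound) => n /asbP [U [UP dimU]] maxU.
exists U => x; split=> [/UP //|Px]; apply: contraT => xNU.
have UxP y : y \in (U + <[x]>)%VS -> P y.
  by case/memv_addP=> u uU [v /vlineP [c ->] ->]; apply: PD; [apply: UP | apply: PZ].
have /maxU : inside (\dim (U + <[x]>)) by apply/asbP; exists (U + <[x]>)%VS.
rewrite -dimU => dim_le; have /eqP eqU : (U == U + <[x]>)%VS by rewrite eqEdim addvSl.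
by move: xNU; rewrite eqU -[x in x \in _]add0r memv_add ?mem0v ?memv_line.
Qed.

Lemma dimP_spec : exists U : {vspace vT}, (forall x, x \in U <-> P x) /\ dimP P = \dim U.
Proof. by eexists; split; [apply: epsilon_spec subspace_exists | reflexivity]. Qed.

End SubspacePredicate.

(* The ranks of the powers of an n x n matrix are stationary from n on;
   this gives the idempotent-like power e^n used in Fitting's lemma. *)
Section RankStabilization.
Variables (F : fieldType) (n : nat) (e : 'M[F]_n).
Let r i := \rank (e ^+ i).

Lemma rank_exprS_leq i : (r i.+1 <= r i)%N.
Proof. by rewrite /r exprSr -mulmxE mxrankM_maxl. Qed.

Lemma rank_exprS_stable i : r i.+1 = r i -> r i.+2 = r i.+1.
Proof.
move=> eq_r; have sub : (e ^+ i.+1 <= e ^+ i)%MS by rewrite exprS -mulmxE submxMl.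
have eq_sp : (e ^+ i.+1 :=: e ^+ i)%MS.
  by apply/eqmxP; rewrite -mxrank_leqif_eq //; apply/eqP.
by rewrite /r [e ^+ i.+2]exprSr [e ^+ i.+1 in RHS]exprSr -!mulmxE (eqmxMr e eq_sp).
Qed.

Lemma rank_expr_stable i : r i.+1 = r i -> forall j, r (i + j) = r i.
Proof.
move=> eq_r; have step j : r (i + j).+1 = r (i + j).
  by elim: j => [|j IH]; [rewrite addn0 | rewrite addnS; apply: rank_exprS_stable].
by elim=> [|j IH]; [rewrite addn0 | rewrite addnS step].
Qed.

Lemma rank_stable j : \rank (e ^+ (n + j)) = \rank (e ^+ n).
Proof.
have [i [le_in eq_r]] : exists i, (i <= n)%N /\ r i.+1 = r i.
  apply: NNPP => no_eq.
  have lt_r i : (i <= n)%N -> (r i.+1 < r i)%N.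
    move=> le_in; rewrite ltn_neqAle rank_exprS_leq andbT.
    by apply/eqP=> eq_r; apply: no_eq; exists i.
  have bound i : (i <= n.+1)%N -> (r i + i <= n)%N.
    elim: i => [|i IH] le_i; first by rewrite addn0 /r expr0 -idmxE mxrank1.
    by rewrite addnS -addSn (leq_trans _ (IH (ltnW le_i))) // leq_add2r lt_r.
  by have := bound n.+1 (leqnn _); rewrite addnS ltnNge leq_addl.
have := rank_expr_stable eq_r (n - i + j); have := rank_expr_stable eq_r (n - i).
by rewrite /r addnA subnKC // => -> ->.
Qed.

End RankStabilization.

Lemma linfunE_lin (K : fieldType) (aT rT : vectType K) (f : aT -> rT) :
  (forall (c : K) u v, f (c *: u + v) = c *: f u + f v) -> linfun f =1 f.
Proof.
move=> f_lin v; have lin : linear f by move=> c u w; rewrite f_lin.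
pose F : {linear aT -> rT} := HB.pack f (GRing.isLinear.Build K aT rT *:%R f lin).
exact: (lfunE F v).
Qed.

Section Modules.
Variables (k : finFieldType) (L : falgType k).
Local Notation rep := (rep L).
Local Notation act := (@Defs.ract k L).
Local Notation hom V W := (@is_hom k L V W).

Lemma homM (V W Z : rep) f g : hom V W f -> hom W Z g -> hom V Z (f *m g).
Proof. by move=> hf hg a; rewrite mulmxA hf -!mulmxA hg. Qed.

Lemma hom1 (V : rep) : hom V V 1%:M.
Proof. by move=> a; rewrite mulmx1 mul1mx. Qed.

Lemma hom0 (V W : rep) : hom V W 0.
Proof. by move=> a; rewrite mulmx0 mul0mx. Qed.

Lemma homD (V W : rep) f g : hom V W f -> hom V W g -> hom V W (f + g).
Proof. by move=> hf hg a; rewrite mulmxDr mulmxDl hf hg. Qed.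

Lemma homN (V W : rep) f : hom V W f -> hom V W (- f).
Proof. by move=> hf a; rewrite mulmxN mulNmx hf. Qed.

Lemma homB (V W : rep) f g : hom V W f -> hom V W g -> hom V W (f - g).
Proof. by move=> hf hg; apply: homD (homN hg). Qed.

Lemma homZ (V W : rep) c f : hom V W f -> hom V W (c *: f).
Proof. by move=> hf a; rewrite -scalemxAr hf scalemxAl. Qed.

Lemma homX (V : rep) e m : hom V V e -> hom V V (e ^+ m).
Proof.
move=> he; elim: m => [|m IH]; first by rewrite expr0 -idmxE; apply: hom1.
by rewrite exprS -mulmxE; apply: homM.
Qed.

Lemma hom_inv (V W : rep) (P : 'M_(rdim W, rdim V)) (Q : 'M_(rdim V, rdim W)) :
  hom W V P -> P *m Q = 1%:M -> Q *m P = 1%:M -> hom V W Q.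
Proof.
move=> hP PQ QP a.
have -> : act V a *m Q = Q *m P *m act V a *m Q by rewrite QP mul1mx.
by rewrite -(mulmxA Q P) -hP !mulmxA -(mulmxA _ P Q) PQ mulmx1.
Qed.

Lemma hom_invmx (V : rep) u : hom V V u -> u \in unitmx -> hom V V (invmx u).
Proof. by move=> hu uu; apply: hom_inv hu (mulmxV uu) (mulVmx uu). Qed.

Lemma iso_inv (V W : rep) (P : 'M_(rdim W, rdim V)) (Q : 'M_(rdim V, rdim W)) :
  hom W V P -> P *m Q = 1%:M -> Q *m P = 1%:M -> iso V W.
Proof.
move=> hP PQ QP; exists Q; split; first exact: hom_inv hP PQ QP.
  by apply/row_freeP; exists P.
by apply/row_fullP; exists P.
Qed.

Lemma iso_invP (V W : rep) : iso V W ->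
  exists Q : 'M_(rdim V, rdim W), exists P : 'M_(rdim W, rdim V),
   [/\ hom V W Q, hom W V P, Q *m P = 1%:M & P *m Q = 1%:M].
Proof.
case=> Q [hQ fr fu]; have [P QP] := row_freeP fr.
have PQ : P *m Q = 1%:M by apply: (row_full_inj fu); rewrite mulmxA QP mul1mx mulmx1.
by exists Q, P; split=> //; apply: hom_inv hQ QP PQ.
Qed.

Lemma hom_col (V W Z : rep) f g : hom V Z f -> hom W Z g -> hom (dsum V W) Z (col_mx f g).
Proof.
by move=> hf hg a; rewrite /= mul_block_col mul_col_mx !mul0mx addr0 add0r hf hg.
Qed.

Lemma hom_colK (V W Z : rep) h : hom (dsum V W) Z h ->
  hom V Z (usubmx h) /\ hom W Z (dsubmx h).
Proof.
move=> hh; split=> a; have := hh a;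
  rewrite -{1 2}(vsubmxK h) /= mul_block_col mul_col_mx !mul0mx ?addr0 ?add0r;
  by case/eq_col_mx.
Qed.

Lemma hom_row (V W Z : rep) f g : hom Z V f -> hom Z W g -> hom Z (dsum V W) (row_mx f g).
Proof.
by move=> hf hg a; rewrite /= mul_row_block mul_mx_row !mulmx0 addr0 add0r hf hg.
Qed.

Lemma hom_rowK (V W Z : rep) h : hom Z (dsum V W) h ->
  hom Z V (lsubmx h) /\ hom Z W (rsubmx h).
Proof.
move=> hh; split=> a; have := hh a;
  rewrite -{1 2}(hsubmxK h) /= mul_row_block mul_mx_row !mulmx0 ?addr0 ?add0r;
  by case/eq_row_mx.
Qed.

Lemma module_dsum (V W : rep) : is_module V -> is_module W -> is_module (dsum V W).
Proof.
case=> linV oneV mulV [linW oneW mulW]; split=> [c a b|| a b] /=.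
- by rewrite linV linW scale_block_mx add_block_mx !scaler0 !addr0.
- by rewrite oneV oneW -scalar_mx_block.
- by rewrite mulV mulW mulmx_block !mulmx0 !mul0mx !addr0 !add0r.
Qed.

Lemma module_nsum (V : rep) s : is_module V -> is_module (nsum s V).
Proof.
move=> mV; elim: s => [|s IH] /=; last exact: module_dsum.
by split=> *; rewrite ?flatmx0 //; apply: flatmx0.
Qed.

Definition homset (V W : rep) := [set f : 'M[k]_(rdim V, rdim W) | asb (hom V W f)].

Lemma card_homset (V W : rep) : #|homset V W| = (#|k| ^ hom_dim V W)%N.
Proof.
have [U [UP dimU]] := dimP_spec (@hom0 V W) (@homD V W) (fun c f => @homZ V W c f).
by rewrite /hom_dim dimU -card_vspace; apply: eq_card => f; rewrite inE; apply/asbP/idP => /UP.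
Qed.

Lemma card_homset_dsuml (V W Z : rep) :
  #|homset (dsum V W) Z| = (#|homset V Z| * #|homset W Z|)%N.
Proof.
rewrite -cardsX -(card_imset _ (f := fun p => col_mx p.1 p.2)); last first.
  by move=> [a b] [c d] /= /eq_col_mx [-> ->].
apply: eq_card => h; rewrite !inE; apply/asbP/imsetP => [hh | [[f g]]].
  have [hu hd] := hom_colK hh.
  by exists (usubmx h, dsubmx h); rewrite ?vsubmxK // !inE; apply/andP; split; apply/asbP.
by rewrite !inE => /andP [/asbP hf /asbP hg] ->; apply: hom_col.
Qed.

Lemma card_homset_dsumr (V W Z : rep) :
  #|homset Z (dsum V W)| = (#|homset Z V| * #|homset Z W|)%N.
Proof.
rewrite -cardsX -(card_imset _ (f := fun p => row_mx p.1 p.2)); last first.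
  by move=> [a b] [c d] /= /eq_row_mx [-> ->].
apply: eq_card => h; rewrite !inE; apply/asbP/imsetP => [hh | [[f g]]].
  have [hl hr] := hom_rowK hh.
  by exists (lsubmx h, rsubmx h); rewrite ?hsubmxK // !inE; apply/andP; split; apply/asbP.
by rewrite !inE => /andP [/asbP hf /asbP hg] ->; apply: hom_row.
Qed.

Lemma card_homset_nsum (V W : rep) s t :
  #|homset (nsum t V) (nsum s W)| = (#|homset V W| ^ (s * t))%N.
Proof.
have homset_nsumr (Z : rep) : #|homset Z (nsum s W)| = (#|homset Z W| ^ s)%N.
  elim: s => [|s' IH] /=; last by rewrite card_homset_dsumr IH expnS.
  rewrite expn0 -(cards1 (0 : 'M[k]_(rdim Z, 0))); apply: eq_card => f.
  by rewrite !inE thinmx0 eqxx; apply/asbP; apply: hom0.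
elim: t => [|t IH] /=; last by rewrite card_homset_dsuml IH homset_nsumr mulnS expnD.
rewrite muln0 expn0 -(cards1 (0 : 'M[k]_(0, rdim (nsum s W)))); apply: eq_card => f.
by rewrite !inE flatmx0 eqxx; apply/asbP; apply: hom0.
Qed.

(* For E = e^n the image and kernel of E are submodules
   splitting V, since rank (E E) = rank E. *)
Definition subrep (V : rep) r (M : 'M[k]_(r, rdim V)) : rep :=
  @Rep k L r (fun a => M *m act V a *m pinvmx M).

Section Subrep.
Variables (V : rep) (r : nat) (M : 'M[k]_(r, rdim V)).
Hypothesis M_stable : forall a, (M *m act V a <= M)%MS.

Lemma subrep_hom : hom (subrep M) V M.
Proof. by move=> a; rewrite mulmxKpV. Qed.

Lemma subrep_module : is_module V -> row_free M -> is_module (subrep M).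
Proof.
case=> linV oneV mulV frM.
have restrictK c : M *m act V c *m pinvmx M *m M = M *m act V c by rewrite mulmxKpV.
split=> [c a b|| a b]; apply: (row_free_inj frM) => /=.
- by rewrite linV mulmxDr mulmxDl -scalemxAr -scalemxAl.
- by rewrite oneV mulmx1 mulmxKpV ?submx_refl // mul1mx.
- by rewrite restrictK mulV -[RHS]mulmxA restrictK [RHS]mulmxA restrictK mulmxA.
Qed.

End Subrep.

Lemma fitting (V : rep) e : indecomposable V -> hom V V e ->
  e ^+ rdim V = 0 \/ e \in unitmx.
Proof.
case=> modV pos indecV he; set n := rdim V; set E := e ^+ n.
have hE : hom V V E by apply: homX.
have rank_cap : \rank (E :&: kermx E)%MS = 0%N.
  have rEE : \rank (E *m E) = \rank E by rewrite mulmxE -exprD rank_stable.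
  by apply/eqP; rewrite -(eqn_add2l (\rank E)) addn0 -{1}rEE mxrank_mul_ker.
set M1 := row_base E; set M2 := row_base (kermx E).
have stable1 a : (M1 *m act V a <= M1)%MS.
  by rewrite (eqmxMr _ (eq_row_base E)) eq_row_base -hE submxMl.
have stable2 a : (M2 *m act V a <= M2)%MS.
  rewrite (eqmxMr _ (eq_row_base _)) eq_row_base sub_kermx -mulmxA hE.
  by rewrite mulmxA mulmx_ker mul0mx.
have [rankE_le rank_sum] : (\rank E <= n)%N /\ \rank (col_mx M1 M2) = n.
  split; first exact: rank_leq_row.
  rewrite -addsmxE; have := mxrank_sum_cap M1 M2.
  rewrite (cap_eqmx (eq_row_base E) (eq_row_base (kermx E))) rank_cap addn0 => ->.
  by rewrite !eq_row_base mxrank_ker subnKC ?rank_leq_row.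
have [Q PQ] : exists Q, col_mx M1 M2 *m Q = 1%:M.
  by apply/row_freeP; rewrite /row_free rank_sum mxrank_ker subnKC.
have QP : Q *m col_mx M1 M2 = 1%:M.
  apply: (@row_full_inj _ _ _ _ (col_mx M1 M2)); first by rewrite /row_full rank_sum.
  by rewrite mulmxA PQ mul1mx mulmx1.
have hP : hom (dsum (subrep M1) (subrep M2)) V (col_mx M1 M2).
  by apply: hom_col; apply: subrep_hom.
case: (indecV _ _ (subrep_module stable1 modV (row_base_free _))
  (subrep_module stable2 modV (row_base_free _)) (iso_inv hP PQ QP)) => /= [|rank0].
  by move/eqP; rewrite mxrank_eq0 => /eqP rE; left; rewrite -/E -rE.
right; rewrite mxrank_ker in rank0.
have rE : \rank E = n by apply/eqP; rewrite eqn_leq rankE_le -subn_eq0 rank0.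
have E_factor : E = e ^+ n.-1 *m e by rewrite mulmxE -exprSr prednK.
by rewrite -row_free_unit /row_free eqn_leq rank_leq_row -{1}rE E_factor mxrankM_maxr.
Qed.

Definition in_rad (V W : rep) (x : 'M[k]_(rdim V, rdim W)) :=
  forall y, hom W V y -> (1%:M - x *m y) \in unitmx.

(* 1 - N is invertible for nilpotent N (geometric series). *)
Lemma unit_1subn_nilpotent n (N : 'M[k]_n) m : N ^+ m = 0 -> (1%:M - N) \in unitmx.
Proof.
move=> Nm; have := subrX1 N m; rewrite Nm sub0r => geom.
have : (1%:M - N) *m (\sum_(i < m) N ^+ i) = 1%:M.
  by rewrite mulmxE -opprB mulNr -geom opprK.
by case/mulmx1_unit.
Qed.

(* A homomorphism between non-isomorphic indecomposables is radical: if
   x y were not nilpotent it would be invertible, and then y (x y)^-1 x would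
   be an idempotent which, by Fitting's lemma, is the identity, making x an
   isomorphism. *)
Lemma in_rad_indec (mu nu : rep) x : indecomposable mu -> indecomposable nu ->
  ~ iso mu nu -> hom nu mu x -> in_rad x.
Proof.
move=> imu inu niso hx y hy; set z := x *m y.
have hz : hom nu nu z by apply: homM.
case: (fitting inu hz) => [zn | uz]; first exact: unit_1subn_nilpotent zn.
set w := invmx z; have hw : hom nu nu w by apply: hom_invmx.
set e := y *m w *m x; have he : hom mu mu e by apply: homM => //; apply: homM.
have zw : z *m w = 1%:M by rewrite mulmxV.
have ee : e *m e = e by rewrite /e -!mulmxA (mulmxA x y) -/z (mulmxA z) zw mul1mx.
have xe : x *m e = x by rewrite /e !mulmxA -/z zw mul1mx.
case: (fitting imu he) => [en | ue].
  have e_pow m : e ^+ m.+1 = e by elim: m => [|m IH]; rewrite ?expr1 // exprS IH -mulmxE ee.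
  have e0 : e = 0.
    by case: imu en => _ pos _; have := e_pow (rdim mu).-1; rewrite prednK // => ->.
  have z0 : z = 0 by rewrite /z -xe e0 !mulmx0 mul0mx.
  case: inu uz => _ pos _; rewrite z0 -row_free_unit /row_free mxrank0 eq_sym.
  by move=> /eqP nu0; rewrite nu0 in pos.
have e1 : e = 1%:M by apply: (row_free_inj (A := e)); rewrite ?row_free_unit // ee mul1mx.
by case: niso; apply: (iso_inv (P := x) (Q := y *m w)); rewrite // mulmxA -/z.
Qed.

Lemma in_rad_row (Z V W : rep) x1 x2 : hom Z V x1 -> hom Z W x2 ->
  in_rad x1 -> in_rad x2 -> in_rad (W := dsum V W) (row_mx x1 x2).
Proof.
move=> h1 h2 r1 r2 y hy; have [hy1 hy2] := hom_colK hy.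
rewrite -(vsubmxK y) mul_row_col; set y1 := usubmx y; set y2 := dsubmx y.
set u := 1%:M - x1 *m y1; have uu : u \in unitmx by apply: r1.
have hu : hom Z Z u by apply: homB; [apply: hom1 | apply: homM].
have hv : hom W Z (y2 *m invmx u) by apply: homM => //; apply: hom_invmx.
have -> : 1%:M - (x1 *m y1 + x2 *m y2) = (1%:M - x2 *m (y2 *m invmx u)) *m u.
  by rewrite mulmxBl mul1mx -!mulmxA mulVmx // mulmx1 /u opprD addrA.
by rewrite unitmx_mul uu andbT; apply: r2.
Qed.

Lemma in_rad_col (Z V W : rep) x1 x2 : hom V Z x1 -> hom W Z x2 ->
  in_rad x1 -> in_rad x2 -> in_rad (V := dsum V W) (col_mx x1 x2).
Proof.
move=> h1 h2 r1 r2 y hy; have [hy1 hy2] := hom_rowK hy.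
rewrite -(hsubmxK y) mul_col_row; set y1 := lsubmx y; set y2 := rsubmx y.
set u := 1%:M - x1 *m y1; have uu : u \in unitmx by apply: r1.
set y' := y2 + y1 *m invmx u *m x1 *m y2.
have hy' : hom Z W y'.
  by apply: homD => //; do 3!apply: homM => //; apply: hom_invmx => //; apply: homB;
    [apply: hom1 | apply: homM].
have -> : 1%:M - block_mx (x1 *m y1) (x1 *m y2) (x2 *m y1) (x2 *m y2) =
   block_mx 1%:M 0 (- x2 *m y1 *m invmx u) 1%:M *m
   block_mx u (- (x1 *m y2)) 0 (1%:M - x2 *m y').
  rewrite mulmx_block !mul1mx ?mul0mx ?mulmx0 ?addr0 ?add0r.
  rewrite (scalar_mx_block (rdim V) (rdim W)) opp_block_mx add_block_mx ?oppr0 ?add0r.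
  congr block_mx; first by rewrite -!mulmxA mulVmx // mulmx1 mulNmx.
  rewrite !mulNmx mulmxN opprK /y' mulmxDr opprD !mulmxA.
  by rewrite [RHS]addrC -!addrA addNr addr0.
rewrite unitmx_mul !unitmxE det_lblock det_ublock !det1 mul1r unitr1 /=.
by rewrite unitrM -!unitmxE uu r2.
Qed.

Lemma in_rad_nsum (mu nu : rep) s t x : indecomposable mu -> indecomposable nu ->
  ~ iso mu nu -> hom (nsum t nu) (nsum s mu) x -> in_rad x.
Proof.
move=> imu inu niso.
have in_rad_nu s' (x' : 'M_(rdim nu, rdim (nsum s' mu))) :
    hom nu (nsum s' mu) x' -> in_rad x'.
  elim: s' x' => [|s' IH] x' hx /=.
    by move=> y _; rewrite (thinmx0 x') mul0mx subr0 unitmx1.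
  rewrite -(hsubmxK x'); have [hl hr] := hom_rowK hx.
  by apply: in_rad_row => //; [apply: in_rad_indec hl | apply: IH].
elim: t x => [|t IH] x hx /=.
  by move=> y _; rewrite (flatmx0 (1%:M - x *m y)) -(flatmx0 1%:M) unitmx1.
rewrite -(vsubmxK x); have [hu hd] := hom_colK hx.
by apply: in_rad_col => //; [apply: in_rad_nu | apply: IH].
Qed.

Section Derivations.
Variables (V W : rep).
Local Notation der := (@is_der k L V W).
Local Notation inner := (@is_inner k L V W).

Lemma der0 : der 0.
Proof. by move=> a b; rewrite !lfunE /= mulmx0 mul0mx addr0. Qed.

Lemma derD d1 d2 : der d1 -> der d2 -> der (d1 + d2).
Proof. by move=> h1 h2 a b; rewrite !add_lfunE h1 h2 mulmxDr mulmxDl addrACA. Qed.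

Lemma derZ c d : der d -> der (c *: d).
Proof. by move=> h a b; rewrite !scale_lfunE h scalerDr scalemxAr scalemxAl. Qed.

Lemma inner0 : inner 0.
Proof. by exists 0 => a; rewrite lfunE /= mulmx0 mul0mx subr0. Qed.

Lemma innerD d1 d2 : inner d1 -> inner d2 -> inner (d1 + d2).
Proof.
case=> [F1 h1] [F2 h2]; exists (F1 + F2) => a.
by rewrite add_lfunE h1 h2 mulmxDr mulmxDl opprD addrACA.
Qed.

Lemma innerZ c d : inner d -> inner (c *: d).
Proof.
by case=> [F h]; exists (c *: F) => a; rewrite scale_lfunE h scalerBr scalemxAr scalemxAl.
Qed.

Lemma inner_der d : is_module V -> is_module W -> inner d -> der d.
Proof.
case=> _ _ mulV [_ _ mulW] [F dF] a b.
by rewrite !dF mulV mulW mulmxBr mulmxBl !mulmxA addrA subrK.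
Qed.

Lemma ext0_inner : is_module V -> is_module W -> ext_dim V W = 0%N ->
  forall d, der d -> inner d.
Proof.
move=> mV mW; have [Ud [UdP dimUd]] := dimP_spec der0 derD derZ.
have [Ui [UiP dimUi]] := dimP_spec inner0 innerD innerZ.
rewrite /ext_dim dimUd dimUi => /eqP; rewrite subn_eq0 => dim_le d /UdP dUd.
have sub : (Ui <= Ud)%VS by apply/subvP => x /UiP /(inner_der mV mW) /UdP.
by apply/UiP; have /eqP -> : Ui == Ud by rewrite eqEdim sub.
Qed.

End Derivations.

(* A derivation into the off-diagonal block of End_k(A (+) B) is inner as
   soon as all derivations L -> End_k(A (+) B) are: Ext^1(A, B) is a direct
   summand of Ext^1(A (+) B, A (+) B). *)
Lemma inner_block (A B : rep) :
  (forall D, @is_der k L (dsum A B) (dsum A B) D -> is_inner D) ->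
  forall d, @is_der k L A B d -> is_inner d.
Proof.
move=> all_inner d hd; pose Dfun x : 'M[k]_(rdim A + rdim B) := block_mx 0 (d x) 0 0.
have DE : linfun Dfun =1 Dfun.
  apply: linfunE_lin => c u v.
  by rewrite /Dfun scale_block_mx add_block_mx !scaler0 !addr0 linearP.
have hD : @is_der k L (dsum A B) (dsum A B) (linfun Dfun).
  move=> a b; rewrite !DE /Dfun /= !mulmx_block hd.
  by rewrite ?mulmx0 ?mul0mx ?addr0 ?add0r add_block_mx ?addr0 ?add0r.
have [F dF] := all_inner _ hD; exists (ursubmx F) => x.
have := dF x; rewrite DE /Dfun /= -{1 2}(submxK F) !mulmx_block.
rewrite ?mulmx0 ?mul0mx ?addr0 ?add0r opp_block_mx add_block_mx.
by case/eq_block_mx.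
Qed.

(* A short exact sequence 0 -> B --f--> X --g--> A -> 0 splits when every
   derivation L -> Hom_k(A, B) is inner: a k-linear section of g is corrected
   to an L-linear one by the inner derivation measuring its defect. *)
Section Splitting.
Variables (A B X : rep).
Hypotheses (mA : is_module A) (mX : is_module X).
Variables (f : 'M[k]_(rdim B, rdim X)) (g : 'M[k]_(rdim X, rdim A)).
Hypotheses (hf : hom B X f) (frf : row_free f) (hg : hom X A g) (fug : row_full g)
  (kerg : (kermx g == f)%MS).

Lemma ses_comp0 : f *m g = 0.
Proof. by apply/eqP; rewrite -sub_kermx; case/andP: kerg. Qed.

Lemma ses_factor m (Y : 'M_(m, rdim X)) : Y *m g = 0 -> Y *m pinvmx f *m f = Y.
Proof.
move=> Yg; apply: mulmxKpV; apply: submx_trans (proj1 (andP kerg)).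
by rewrite sub_kermx Yg.
Qed.

Lemma ses_section : (forall d, @is_der k L A B d -> is_inner d) ->
  exists sec, hom A X sec /\ sec *m g = 1%:M.
Proof.
move=> all_inner; set s := pinvmx g.
have sg : s *m g = 1%:M by rewrite -{1}[s]mul1mx mulmxKpV // sub1mx.
case: mA mX => linA _ mulA [linX _ mulX].
pose defect x := (s *m act X x - act A x *m s) *m pinvmx f.
have defectK x : defect x *m f = s *m act X x - act A x *m s.
  apply: ses_factor; rewrite mulmxBl -mulmxA hg mulmxA sg -mulmxA sg.
  by rewrite mul1mx mulmx1 subrr.
have dE : linfun defect =1 defect.
  apply: linfunE_lin => c u v; rewrite /defect scalemxAl -mulmxDl; congr (_ *m _).
  by rewrite linA linX mulmxDr mulmxDl -scalemxAr -scalemxAl scalerBr opprD addrACA.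
have der_defect : @is_der k L A B (linfun defect).
  move=> a b; rewrite !dE; apply: (row_free_inj frf) => /=.
  rewrite (defectK (a * b)) [RHS]mulmxDl -[act A a *m defect b *m f]mulmxA defectK.
  rewrite -[defect a *m _ *m f]mulmxA hf [defect a *m _]mulmxA defectK mulX mulA.
  by rewrite mulmxBr mulmxBl !mulmxA [RHS]addrC addrA subrK.
have [F dF] := all_inner _ der_defect.
exists (s + F *m f); split; last first.
  by rewrite mulmxDl -mulmxA ses_comp0 mulmx0 addr0.
move=> x; have := dF x; rewrite dE => /(congr1 (mulmx^~ f)).
rewrite defectK mulmxBl => defect_eq.
rewrite mulmxDr mulmxDl -[F *m f *m _]mulmxA -hf [F *m (_ *m f)]mulmxA.
by rewrite -[s *m _](subrK (act A x *m s)) defect_eq mulmxA addrAC subrK addrC.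
Qed.

Lemma ses_split_iso sec : hom A X sec -> sec *m g = 1%:M ->
  exists P : 'M[k]_(rdim A + rdim B, rdim X), exists Q : 'M[k]_(rdim X, rdim A + rdim B),
  [/\ hom (dsum A B) X P, hom X (dsum A B) Q, P *m Q = 1%:M, Q *m P = 1%:M
    & f *m Q = row_mx 0 1%:M].
Proof.
move=> hsec secg; set r := (1%:M - g *m sec) *m pinvmx f.
have rf : r *m f = 1%:M - g *m sec.
  by apply: ses_factor; rewrite mulmxBl mul1mx -mulmxA secg mulmx1 subrr.
have fpf : f *m pinvmx f = 1%:M.
  by apply: (row_free_inj frf); rewrite mul1mx mulmxKpV ?submx_refl.
have sec_r : sec *m r = 0.
  by rewrite /r mulmxA mulmxBr mulmx1 [sec *m (g *m sec)]mulmxA secg mul1mx subrr mul0mx.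
have fr : f *m r = 1%:M.
  by rewrite /r mulmxA mulmxBr mulmx1 [f *m (g *m sec)]mulmxA ses_comp0 mul0mx subr0 fpf.
have PQ : col_mx sec f *m row_mx g r = 1%:M.
  by rewrite mul_col_row secg sec_r ses_comp0 fr -scalar_mx_block.
have QP : row_mx g r *m col_mx sec f = 1%:M by rewrite mul_row_col rf addrC subrK.
have hP : hom (dsum A B) X (col_mx sec f) by apply: hom_col.
exists (col_mx sec f), (row_mx g r); split=> //; first exact: hom_inv hP PQ QP.
by rewrite mul_mx_row ses_comp0 fr.
Qed.

End Splitting.

Definition hall_sub (X A B : rep) (U : 'M[k]_(rdim X)) : bool :=
  [&& U == genmx U,
      asb (exists f : 'M[k]_(rdim B, rdim X), [/\ hom B X f, row_free f & (f == U)%MS]) &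
      asb (exists g : 'M[k]_(rdim X, rdim A), [/\ hom X A g, row_full g & (kermx g == U)%MS])].
Arguments hall_sub : clear implicits.

Lemma hallE (X A B : rep) : hall X A B = #|[set U | hall_sub X A B U]|.
Proof. by []. Qed.

Lemma hall_subP (X A B : rep) U : hall_sub X A B U ->
  exists f g, [/\ U = <<U>>%MS, hom B X f, row_free f, (f :=: U)%MS &
    [/\ hom X A g, row_full g & (kermx g == f)%MS]].
Proof.
case/and3P=> /eqP genU /asbP [f [hf frf /eqmxP fU]] /asbP [g [hg fug /eqmxP kerU]].
exists f, g; split=> //; split=> //.
by apply/eqmxP; apply: eqmx_trans kerU (eqmx_sym fU).
Qed.

Lemma hall_noiso (A B X : rep) : is_module A -> is_module X ->
  (forall d, @is_der k L A B d -> is_inner d) -> ~ iso X (dsum A B) ->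
  hall X A B = 0%N.
Proof.
move=> mA mX all_inner niso; rewrite hallE; apply: eq_card0 => U; rewrite inE.
apply/negP => /hall_subP [f [g [_ hf frf _ [hg fug kerg]]]].
have [sec [hsec secg]] := ses_section mA mX hf frf hg fug kerg all_inner.
have [P [Q [hP _ PQ QP _]]] := ses_split_iso hf frf kerg hsec secg.
by apply: niso; apply: iso_inv hP PQ QP.
Qed.

(* Inside X ~ A (+) B (via Q0 : X -> A (+) B with inverse P0), the graph of
   phi : B -> A is the submodule {(phi b, b)}. *)
Section Graphs.
Variables (A B X : rep).
Variables (Q0 : 'M[k]_(rdim X, rdim A + rdim B)) (P0 : 'M[k]_(rdim A + rdim B, rdim X)).
Hypotheses (hQ0 : hom X (dsum A B) Q0) (hP0 : hom (dsum A B) X P0)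
  (QP0 : Q0 *m P0 = 1%:M) (PQ0 : P0 *m Q0 = 1%:M).

Definition graph (phi : 'M[k]_(rdim B, rdim A)) : 'M[k]_(rdim X) :=
  <<row_mx phi 1%:M *m P0>>%MS.

Lemma graph_inj : injective graph.
Proof.
move=> phi psi eq_graph.
have : (row_mx phi 1%:M *m P0 <= row_mx psi 1%:M *m P0)%MS.
  by rewrite -(genmxE (row_mx psi 1%:M *m P0)) -/(graph psi) -eq_graph genmxE.
move/(submxMr Q0); rewrite -!mulmxA PQ0 !mulmx1.
by case/submxP=> D; rewrite mul_mx_row mulmx1 => /eq_row_mx [-> <-]; rewrite mul1mx.
Qed.

(* The graph of a homomorphism is counted by g^X_{A B}: it is the image of
   b |-> (phi b, b) and the kernel of (a, b) |-> a - phi b. *)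
Lemma graph_hall_sub phi : hom B A phi -> hall_sub X A B (graph phi).
Proof.
move=> hphi; rewrite /hall_sub /graph genmx_id eqxx /=; apply/andP; split; apply/asbP.
  exists (row_mx phi 1%:M *m P0); split; last by apply/eqmxP; apply: eqmx_sym (genmxE _).
    by apply: homM hP0; apply: hom_row (hom1 _).
  apply/row_freeP; exists (Q0 *m col_mx 0 1%:M).
  by rewrite mulmxA -(mulmxA _ P0) PQ0 mulmx1 mul_row_col mulmx0 add0r mulmx1.
exists (Q0 *m col_mx 1%:M (- phi)); split.
- by apply: homM hQ0 _; apply: hom_col (hom1 _) (homN hphi).
- apply/row_fullP; exists (row_mx 1%:M 0 *m P0).
  by rewrite mulmxA -(mulmxA _ P0) PQ0 mulmx1 mul_row_col mul1mx mul0mx addr0.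
apply/andP; split; rewrite genmxE; last first.
  by rewrite sub_kermx mulmxA -(mulmxA _ P0) PQ0 mulmx1 mul_row_col mulmx1 mul1mx subrr.
set K := kermx _; have : K *m Q0 *m col_mx 1%:M (- phi) = 0 by rewrite -mulmxA mulmx_ker.
rewrite -[K *m Q0]hsubmxK mul_row_col mulmx1 mulmxN => /eqP; rewrite subr_eq0 => /eqP K_l.
have -> : K = rsubmx (K *m Q0) *m (row_mx phi 1%:M *m P0).
  by rewrite mulmxA mul_mx_row mulmx1 -K_l hsubmxK -mulmxA QP0 mulmx1.
exact: submxMl.
Qed.

(* Conversely, if Ext^1(A, B) = 0 and every homomorphism B -> A is radical,
   each counted submodule is a graph: a retraction r of the embedding
   f = (f1, f2) gives f1 r1 + f2 r2 = 1 with f1 r1 radical, so f2 is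
   invertible and U = image f = graph (f2^-1 f1). *)
Lemma hall_sub_graph U : is_module A -> is_module X ->
  (forall d, @is_der k L A B d -> is_inner d) ->
  (forall x, hom B A x -> in_rad x) ->
  hall_sub X A B U -> exists2 phi, hom B A phi & U = graph phi.
Proof.
move=> mA mX all_inner rad_BA /hall_subP [f [g [genU hf frf fU [hg fug kerg]]]].
have [sec [hsec secg]] := ses_section mA mX hf frf hg fug kerg all_inner.
have [_ [Q [_ hQ _ _ fQ]]] := ses_split_iso hf frf kerg hsec secg.
set r := Q *m col_mx (0 : 'M_(rdim A, rdim B)) 1%:M.
have hr : hom X B r by apply: homM hQ (hom_col (hom0 _ _) (hom1 _)).
have fr : f *m r = 1%:M by rewrite /r mulmxA fQ mul_row_col mul0mx add0r mulmx1.
set f1 := lsubmx (f *m Q0); set f2 := rsubmx (f *m Q0).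
have [hf1 hf2] := hom_rowK (homM hf hQ0).
set r1 := usubmx (P0 *m r); set r2 := dsubmx (P0 *m r).
have [hr1 _] := hom_colK (homM hP0 hr).
have f_r : f1 *m r1 + f2 *m r2 = 1%:M.
  by rewrite -mul_row_col hsubmxK vsubmxK mulmxA -(mulmxA f) QP0 mulmx1 fr.
have uf2 : f2 \in unitmx.
  have : (f2 *m r2) \in unitmx.
    by rewrite -(addKr (f1 *m r1) (f2 *m r2)) f_r addrC; apply: rad_BA.
  by rewrite unitmx_mul => /andP [].
exists (invmx f2 *m f1); first by apply: homM hf1; apply: hom_invmx.
have f_graph : f = f2 *m (row_mx (invmx f2 *m f1) 1%:M *m P0).
  rewrite mulmxA mul_mx_row mulmxA mulmxV // mul1mx mulmx1 hsubmxK.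
  by rewrite -mulmxA QP0 mulmx1.
rewrite genU /graph; apply/eq_genmx; apply: eqmx_trans (eqmx_sym fU) _.
by rewrite {1}f_graph; apply: eqmxMfull; rewrite row_full_unit.
Qed.

End Graphs.

Lemma hall_iso (A B X : rep) : is_module A -> is_module X ->
  (forall d, @is_der k L A B d -> is_inner d) ->
  (forall x, hom B A x -> in_rad x) ->
  iso X (dsum A B) -> hall X A B = #|homset B A|.
Proof.
move=> mA mX all_inner rad_BA isoX.
have [Q0 [P0 [hQ0 hP0 QP0 PQ0]]] := iso_invP isoX.
rewrite hallE -(card_imset _ (graph_inj PQ0)); apply: eq_card => U; rewrite !inE.
apply/idP/imsetP => [|[phi]].
  case/(hall_sub_graph hQ0 hP0 QP0 mA mX all_inner rad_BA) => phi hphi ->.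
  by exists phi; rewrite // inE; apply/asbP.
by rewrite inE => /asbP hphi ->; apply: graph_hall_sub.
Qed.

End Modules.

Lemma vq_cancel (k : finFieldType) (e : int) n :
  vq k ^ (e - (2 * n)%N%:Z) * (vq k ^ (- e) * (#|k| ^ n)%N%:R) = 1.
Proof.
have v0 : vq k != 0 by rewrite sqrtC_eq0 pnatr_eq0 -lt0n; apply/card_gt0P; exists 0.
rewrite mulrA -expfzDr // addrAC subrr add0r -exprnN natrX -(sqrtCK (#|k|%:R)) -/(vq k).
by rewrite -exprM mulVf // expf_neq0.
Qed.

Theorem mainTheorem7 (k : finFieldType) (L : falgType k) (mu nu : rep L) (s t : nat) :
  hereditary L ->
  indecomposable mu -> indecomposable nu -> ~ iso mu nu ->
  (1 <= s)%N -> (1 <= t)%N ->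
  exceptional (dsum (nsum s mu) (nsum t nu)) ->
  forall X : rep L, is_module X ->
    hbasis (dsum (nsum s mu) (nsum t nu)) X =
    vq k ^ (euler (nsum t nu) (nsum s mu) - (2 * s * t * hom_dim nu mu)%N%:Z)
      * hmul_basis (nsum s mu) (nsum t nu) X.
Proof.
move=> _ imu inu niso _ _ exc X mX.
have mA : is_module (nsum s mu) by apply: module_nsum; case: imu.
have mB : is_module (nsum t nu) by apply: module_nsum; case: inu.
have mAB := module_dsum mA mB.
have Ext_AB0 := inner_block (ext0_inner mAB mAB exc).
rewrite /hbasis /hmul_basis; case: asbP => [isoX | nisoX].
  have rad_BA := fun x (hx : is_hom x) => in_rad_nsum (s := s) (t := t) imu inu niso hx.
  rewrite (hall_iso mA mX Ext_AB0 rad_BA isoX) card_homset_nsum card_homset -expnM.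
  have -> : (2 * s * t * hom_dim nu mu = 2 * (s * t * hom_dim nu mu))%N by rewrite !mulnA.
  by rewrite (mulnC (hom_dim nu mu)) vq_cancel.
by rewrite (hall_noiso mA mX Ext_AB0 nisoX) !mulr0.
Qed.
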